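(* Let $G$ be a network with three sources and three terminals containing no vertex of type $(3,3)$, $(2,3)$ or $(3,2)$. If $v$ is a vertex of type $(2,2)$, then for each terminal $t_j$ in the terminal color of $v$ there exists a directed path $P$ from a source to $t_j$ whose leaf of $t_j$ is a vertex of type $(2,2)$ with color equal to $\mathrm{col}(v)$. (E.g., if $\mathrm{col}(v)=(s_1,s_2,t_1,t_2)$, then both $t_1$ and $t_2$ have leaves of color $(s_1,s_2,t_1,t_2)$.)
   Context: A network is a finite directed acyclic graph $G=(V,E)$ with three sources $s_1,s_2,s_3$ (no incoming edges) and three terminals $t_1,t_2,t_3$ (no outgoing edges). For $v\in V$, $c_s(v)$ is the number of sources with a directed path to $v$ and $c_t(v)$ the number of terminals reachable from $v$ by a directed path (a vertex reaches itself, so e.g. each terminal has $c_t=1$); $(c_s(v),c_t(v))$ is the type of $v$. For a vertex $v$ of type $(2,2)$, its color $\mathrm{col}(v)$ is the tuple $(s_a,s_b,t_c,t_d)$ consisting of the two sources reaching $v$ and the two terminals reachable from $v$; $(s_a,s_b)$ is its source color and $(t_c,t_d)$ its terminal color. For a directed path $P$ from a source to a terminal $t_j$, the leaf of $t_j$ corresponding to $P$ is the last vertex $v_P$ on $P$ with $c_t(v_P)\ge 2$ (so every later vertex of $P$ has $c_t=1$); the leaves of $t_j$ are all such vertices. *)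

From mathcomp Require Import all_boot.
Set Implicit Arguments. Unset Strict Implicit. Unset Printing Implicit Defensive.

Record network (V : finType) (e : rel V) (s t : 'I_3 -> V) : Prop := Network {
  net_acyclic : forall x y, e x y -> ~~ connect e y x;
  net_src_noin : forall i x, ~~ e x (s i);
  net_term_noout : forall j y, ~~ e (t j) y;
  net_s_inj : injective s;
  net_t_inj : injective t;
  net_st_disj : forall i j, s i != t j
}.

Section Net.
Variables (V : finType) (e : rel V) (s t : 'I_3 -> V).

(* indices of sources reaching v, and of terminals reachable from v
   (connect is reflexive-transitive: a vertex reaches itself) *)
Definition srcs_of (v : V) : {set 'I_3} := [set i | connect e (s i) v].
Definition terms_of (v : V) : {set 'I_3} := [set j | connect e v (t j)].
Definition c_s (v : V) : nat := #|srcs_of v|.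
Definition c_t (v : V) : nat := #|terms_of v|.
Definition has_type (v : V) (a b : nat) : Prop := c_s v = a /\ c_t v = b.

Definition col (v : V) : {set 'I_3} * {set 'I_3} := (srcs_of v, terms_of v).

Definition is_st_path (i j : 'I_3) (p : seq V) : bool :=
  path e (s i) p && (last (s i) p == t j).

Definition leaf (i : 'I_3) (p : seq V) : option V :=
  let l := [seq x <- s i :: p | 2 <= c_t x] in
  if l is x :: l' then Some (last x l') else None.

End Net.

From mathcomp Require Import all_boot.

(* Prolong a path from a source to v by a path from v to t_j.  Since c_t v = 2,
   the leaf w of t_j lies on the part after v, so v reaches w and w reaches t_j.
   Hence the terminal color of w is contained in that of v and the source color
   of v in that of w; c_t w >= 2 forces equality of terminal colors, and since
   no vertex has type (3,2), also c_s w = 2 and the source colors agree. *)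

Set Implicit Arguments.
Unset Strict Implicit.
Unset Printing Implicit Defensive.

Lemma filter_cat_cons (T : Type) (P : pred T) (l1 l2 : seq T) (x : T) :
  P x -> [seq y <- l1 ++ x :: l2 | P y] = [seq y <- l1 | P y] ++ x :: [seq y <- l2 | P y].
Proof. by move=> Px; rewrite filter_cat /= Px. Qed.

Lemma some_last_cat (T : Type) (l1 l2 : seq T) (x : T) :
  (if l1 ++ x :: l2 is y :: l' then Some (last y l') else None) = Some (last x l2).
Proof. by case: l1 => [|y l1] //=; rewrite last_cat. Qed.

Section LastFilter.
Variables (T : finType) (e : rel T) (P : pred T).

Lemma last_filter_path (q : seq T) (x z : T) :
  path e x q -> connect e z x -> P z ->
  connect e z (last z [seq y <- q | P y]) /\ P (last z [seq y <- q | P y]).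
Proof.
elim: q x z => [|y q IHq] x z /=; first by move=> _ zx Pz; split.
case/andP=> exy pyq zx Pz; have zy : connect e z y.
  by apply: connect_trans zx (connect1 exy).
case: ifP => Py /=; last exact: IHq pyq zy Pz.
by have [yw Pw] := IHq y y pyq (connect0 e y) Py; split=> //; apply: connect_trans yw.
Qed.

End LastFilter.

Section Network.
Variables (V : finType) (e : rel V) (s t : 'I_3 -> V).

Lemma srcs_of_connect (v w : V) :
  connect e v w -> srcs_of e s v \subset srcs_of e s w.
Proof. by move=> vw; apply/subsetP=> i; rewrite !inE => /connect_trans; apply. Qed.

Lemma terms_of_connect (v w : V) :
  connect e v w -> terms_of e t w \subset terms_of e t v.
Proof. by move=> vw; apply/subsetP=> j; rewrite !inE; apply: connect_trans. Qed.

Lemma c_s_le3 (v : V) : c_s e s v <= 3.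
Proof. by rewrite /c_s (leq_trans (max_card _)) ?card_ord. Qed.

Lemma terms_of_connect_eq (v w : V) :
  connect e v w -> c_t e t v <= c_t e t w -> terms_of e t w = terms_of e t v.
Proof. by move=> vw le_vw; apply/eqP; rewrite eqEcard terms_of_connect. Qed.

Lemma srcs_of_connect_eq (v w : V) :
  connect e v w -> c_s e s v = 2 -> c_s e s w != 3 -> srcs_of e s w = srcs_of e s v.
Proof.
move=> vw csv csw; apply/esym/eqP; rewrite eqEcard srcs_of_connect //=.
have := subset_leq_card (srcs_of_connect vw); rewrite -!/(c_s _ _ _) csv.
by move: csw (c_s_le3 w); case: (c_s e s w) => [|[|[|[]]]].
Qed.

Lemma leaf_cat (i : 'I_3) (p q : seq V) :
  2 <= c_t e t (last (s i) p) ->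
  leaf e s t i (p ++ q) =
    Some (last (last (s i) p) [seq x <- q | 2 <= c_t e t x]).
Proof.
by move=> ctv; rewrite /leaf -cat_cons lastI -cats1 -catA filter_cat_cons // some_last_cat.
Qed.

End Network.

Theorem mainTheorem9 (V : finType) (e : rel V) (s t : 'I_3 -> V) :
  network e s t ->
  (forall x : V, ~ has_type e s t x 3 3 /\ ~ has_type e s t x 2 3
                 /\ ~ has_type e s t x 3 2) ->
  forall v : V, has_type e s t v 2 2 ->
  forall j : 'I_3, j \in terms_of e t v ->
  exists (i : 'I_3) (p : seq V) (w : V),
    [/\ is_st_path e s t i j p, leaf e s t i p = Some w,
        has_type e s t w 2 2 & col e s t w = col e s t v].
Proof.
move=> _ no_type v [csv ctv] j.
have [i] : exists i, i \in srcs_of e s v by apply/card_gt0P; rewrite -/(c_s _ _ _) csv.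
rewrite !inE => /connectP[p sp pv] /connectP[q vq tj].
set w := last v [seq x <- q | 2 <= c_t e t x].
have [vw ctw] := last_filter_path (P := fun x => 2 <= c_t e t x) vq (connect0 e _)
  (eq_leq (esym ctv)).
have Tw : terms_of e t w = terms_of e t v by apply: terms_of_connect_eq; rewrite ?ctv.
have ctw2 : c_t e t w = 2 by rewrite /c_t Tw.
have Sw : srcs_of e s w = srcs_of e s v.
  by apply: srcs_of_connect_eq => //; apply/eqP=> csw; case: (no_type w) => _ [_ []].
exists i, (p ++ q), w; split.
- by rewrite /is_st_path cat_path sp last_cat -pv vq -tj /=.
- by rewrite leaf_cat -pv ?ctv.
- by split; rewrite // /c_s Sw.
- by rewrite /col Sw Tw.
Qed.
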